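(* There exist constants $0<M_1\le M_2<\infty$ such that \[M_1\le\inf_{b\in\Sigma(C,A,\gamma)}\ \inf_{x\in[y_1,\bar y]}\xi_b(x)\le\sup_{b\in\Sigma(C,A,\gamma)}\ \sup_{x\in[y_1,\bar y]}\xi_b(x)\le M_2.\]
   Context: Let $\sigma:\mathbb{R}\to\mathbb{R}$ be locally Lipschitz with $\underline\nu\le|\sigma(x)|\le\overline\nu$ for all $x$, for constants $0<\underline\nu\le\overline\nu<\infty$. For constants $A,\gamma>0$, $C\ge1$, let $\Sigma(C,A,\gamma)=\Sigma(C,A,\gamma,\sigma)$ be the set of locally Lipschitz $b:\mathbb{R}\to\mathbb{R}$ with $|b(x)|\le C(1+|x|)$ for all $x$ and $\frac{b(x)}{\sigma^2(x)}\operatorname{sgn}(x)\le-\gamma$ for all $|x|>A$. For $b$ in this class, $\rho_b(x)=\frac{1}{C_{b,\sigma}\sigma^2(x)}\exp\big(\int_0^x\frac{2b(y)}{\sigma^2(y)}\mathrm{d}y\big)$ is the invariant density ($C_{b,\sigma}$ normalizing). Fix $y_0\in\mathbb{R}$ and set $\xi_b(x):=2\int_{y_0}^x\frac{1}{\sigma^2(y)\rho_b(y)}\int_{-\infty}^y\rho_b(z)\,\mathrm{d}z\,\mathrm{d}y$. Here $y_0<y_1<\bar y$ are fixed real numbers. *)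

From Stdlib Require Import Reals Lra ClassicalEpsilon.
Open Scope R_scope.

Definition locally_lipschitz (f : R -> R) : Prop :=
  forall a b : R, exists L : R, forall x y : R,
    a <= x <= b -> a <= y <= b -> Rabs (f x - f y) <= L * Rabs (x - y).

Definition sgn (x : R) : R :=
  if Rlt_dec 0 x then 1 else if Rlt_dec x 0 then -1 else 0.

(* Oriented Riemann integral  int_a^b f  (value chosen classically;
   meaningful whenever f is Riemann integrable on [a,b], e.g. continuous). *)
Definition Rint (f : R -> R) (a b : R) : R :=
  epsilon (inhabits 0)
    (fun I => exists pr : Riemann_integrable f a b, RiemannInt pr = I).

Definition lim_at_minus_infty (g : R -> R) (l : R) : Prop :=
  forall eps, 0 < eps -> exists M, forall a, a <= M -> Rabs (g a - l) < eps.

Definition lim_at_plus_infty (g : R -> R) (l : R) : Prop :=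
  forall eps, 0 < eps -> exists M, forall a, M <= a -> Rabs (g a - l) < eps.

Definition Rint_minf (f : R -> R) (y : R) : R :=
  epsilon (inhabits 0) (fun I => lim_at_minus_infty (fun a => Rint f a y) I).

Definition Rint_pinf (f : R -> R) (y : R) : R :=
  epsilon (inhabits 0) (fun I => lim_at_plus_infty (fun a => Rint f y a) I).

Definition Rint_R (f : R -> R) : R := Rint_minf f 0 + Rint_pinf f 0.

Definition in_Sigma (C A gamma : R) (sigma b : R -> R) : Prop :=
  locally_lipschitz b /\
  (forall x, Rabs (b x) <= C * (1 + Rabs x)) /\
  (forall x, A < Rabs x -> b x / (sigma x) ^ 2 * sgn x <= - gamma).

Definition rho_unnorm (sigma b : R -> R) (x : R) : R :=
  / (sigma x) ^ 2 * exp (Rint (fun y => 2 * b y / (sigma y) ^ 2) 0 x).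

Definition C_bsigma (sigma b : R -> R) : R := Rint_R (rho_unnorm sigma b).

Definition rho (sigma b : R -> R) (x : R) : R :=
  rho_unnorm sigma b x / C_bsigma sigma b.

Definition xi (sigma b : R -> R) (y0 x : R) : R :=
  2 * Rint (fun y => / ((sigma y) ^ 2 * rho sigma b y) * Rint_minf (rho sigma b) y) y0 x.

(* Write G for the primitive of the drift 2b/sigma^2 vanishing at 0, so that
   the unnormalised invariant density is exp(G)/sigma^2.  The normalising
   constant cancels in xi_b, whose integrand becomes
   exp(-G y) * int_{-oo}^y exp(G)/sigma^2.  Take B beyond A, |y0| and |ybar|.
   On [-B, B] the drift is bounded by 2C(1+B)/nu_lo^2, uniformly over the
   class, so G is uniformly Lipschitz there, while outside [-B, B] the drift
   condition makes G decrease at rate at least 2 gamma.  Hence the inner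
   integral is bounded above uniformly in b, and bounded below by its
   contribution from [y-1, y], where exp(G) is comparable to exp(G y). *)

From Stdlib Require Import Reals Lra ClassicalEpsilon Classical FunctionalExtensionality.
From Coquelicot Require Import Coquelicot.
Open Scope R_scope.

Lemma exp_le x y : x <= y -> exp x <= exp y.
Proof. intros [Hlt | <-]; [left; apply exp_increasing, Hlt | apply Rle_refl]. Qed.

Lemma locally_lipschitz_continuous (f : R -> R) :
  locally_lipschitz f -> forall x, continuous f x.
Proof.
intros Hf x. apply continuity_pt_filterlim. intros eps Heps.
destruct (Hf (x - 1) (x + 1)) as [L HL].
set (K := Rabs L + 1).
assert (HK : 0 < K) by (unfold K; pose proof (Rabs_pos L); lra).
exists (Rmin 1 (eps / K)). split.
- apply Rmin_pos; [lra | apply Rdiv_lt_0_compat; lra].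
- intros y [_ Hy]. simpl in *. unfold R_dist in *.
  pose proof (Rmin_l 1 (eps / K)). pose proof (Rmin_r 1 (eps / K)).
  assert (Hyx : Rabs (y - x) < 1) by lra. apply Rabs_def2 in Hyx.
  assert (Hlip : Rabs (f y - f x) <= K * Rabs (y - x)).
  { eapply Rle_trans; [apply HL; lra |].
    apply Rmult_le_compat_r; [apply Rabs_pos | unfold K; pose proof (Rle_abs L); lra]. }
  assert (K * Rabs (y - x) < K * (eps / K)) by (apply Rmult_lt_compat_l; lra).
  replace (K * (eps / K)) with eps in * by (field; lra). lra.
Qed.

Lemma ex_RInt_continuous_R (f : R -> R) a b :
  (forall x, continuous f x) -> ex_RInt f a b.
Proof. intros Hf. apply (@ex_RInt_continuous R_CompleteNormedModule). intros; apply Hf. Qed.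

Lemma Rint_RInt (f : R -> R) a b :
  (forall x, continuous f x) -> Rint f a b = RInt f a b.
Proof.
intros Hf. unfold Rint.
pose proof (ex_RInt_Reals_0 _ _ _ (ex_RInt_continuous_R f a b Hf)) as pr.
destruct (epsilon_spec (inhabits 0)
  (fun I => exists pr : Riemann_integrable f a b, RiemannInt pr = I)) as [pr' <-].
- exists (RiemannInt pr), pr. reflexivity.
- symmetry; apply RInt_Reals.
Qed.

Section ContinuousIntegrals.

Variable f : R -> R.
Hypothesis f_cont : forall x, continuous f x.

Lemma RInt_Chasles_continuous a b c : RInt f a b + RInt f b c = RInt f a c.
Proof. apply (RInt_Chasles f a b c); apply ex_RInt_continuous_R, f_cont. Qed.

Lemma RInt_le_const a b K :
  a <= b -> (forall x, a < x < b -> f x <= K) -> RInt f a b <= (b - a) * K.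
Proof.
intros Hab HK. replace ((b - a) * K) with (RInt (fun _ => K) a b) by (rewrite RInt_const; reflexivity).
apply RInt_le; auto; apply ex_RInt_continuous_R; [exact f_cont | intros; apply continuous_const].
Qed.

Lemma RInt_ge_const a b K :
  a <= b -> (forall x, a < x < b -> K <= f x) -> (b - a) * K <= RInt f a b.
Proof.
intros Hab HK. replace ((b - a) * K) with (RInt (fun _ => K) a b) by (rewrite RInt_const; reflexivity).
apply RInt_le; auto; apply ex_RInt_continuous_R; [intros; apply continuous_const | exact f_cont].
Qed.

Lemma RInt_div a b Z : RInt (fun x => f x / Z) a b = RInt f a b / Z.
Proof.
rewrite (RInt_ext _ (fun x => scal (/ Z) (f x))).
- rewrite (@RInt_scal R_CompleteNormedModule) by (apply ex_RInt_continuous_R, f_cont).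
  unfold scal; simpl; unfold mult; simpl. unfold Rdiv; ring.
- intros; unfold scal; simpl; unfold mult; simpl. unfold Rdiv; ring.
Qed.

Lemma continuous_RInt_0 x : continuous (fun y => RInt f 0 y) x.
Proof.
apply (continuous_RInt_1 f 0 x). apply filter_forall. intros z.
apply (@RInt_correct R_CompleteNormedModule), ex_RInt_continuous_R, f_cont.
Qed.

Hypothesis f_ge0 : forall x, 0 <= f x.

Lemma RInt_nonneg_mono a b c d :
  a <= c -> c <= d -> d <= b -> RInt f c d <= RInt f a b.
Proof.
intros Hac Hcd Hdb.
rewrite <- (RInt_Chasles_continuous a c b), <- (RInt_Chasles_continuous c d b).
assert (0 <= RInt f a c) by (apply RInt_ge_0; auto; apply ex_RInt_continuous_R, f_cont).
assert (0 <= RInt f d b) by (apply RInt_ge_0; auto; apply ex_RInt_continuous_R, f_cont).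
lra.
Qed.

End ContinuousIntegrals.

Lemma lim_at_plus_infty_opp (g : R -> R) l :
  lim_at_plus_infty g l <-> lim_at_minus_infty (fun a => g (- a)) l.
Proof.
split; intros H eps Heps; destruct (H eps Heps) as [M HM]; exists (- M); intros a Ha.
- apply HM; lra.
- replace a with (- - a) by ring. apply HM; lra.
Qed.

Lemma lim_at_minus_infty_unique (g : R -> R) l1 l2 :
  lim_at_minus_infty g l1 -> lim_at_minus_infty g l2 -> l1 = l2.
Proof.
intros H1 H2. apply Rminus_diag_uniq, Rabs_eq_0.
apply Rle_antisym; [| apply Rabs_pos]. apply le_epsilon. intros eps Heps.
destruct (H1 (eps / 2)) as [M1 HM1]; [lra |]. destruct (H2 (eps / 2)) as [M2 HM2]; [lra |].
set (a := Rmin M1 M2). specialize (HM1 a (Rmin_l _ _)). specialize (HM2 a (Rmin_r _ _)).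
replace (l1 - l2) with (- (g a - l1) + (g a - l2)) by ring.
eapply Rle_trans; [apply Rabs_triang |]. rewrite Rabs_Ropp. lra.
Qed.

Lemma lim_at_plus_infty_unique (g : R -> R) l1 l2 :
  lim_at_plus_infty g l1 -> lim_at_plus_infty g l2 -> l1 = l2.
Proof. rewrite !lim_at_plus_infty_opp. apply lim_at_minus_infty_unique. Qed.

Lemma lim_at_minus_infty_div (g : R -> R) L Z :
  0 < Z -> lim_at_minus_infty g L -> lim_at_minus_infty (fun a => g a / Z) (L / Z).
Proof.
intros HZ H eps Heps. destruct (H (eps * Z)) as [M HM]; [nra |]. exists M. intros a Ha.
replace (g a / Z - L / Z) with ((g a - L) / Z) by (field; lra).
unfold Rdiv. rewrite Rabs_mult, Rabs_inv, (Rabs_right Z) by lra.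
apply (Rmult_lt_reg_r Z); [lra |]. field_simplify; [rewrite Rmult_comm; apply HM, Ha | lra].
Qed.

(* The limit is the supremum of the values, by completeness of R. *)
Lemma lim_at_minus_infty_nonincreasing (g : R -> R) U :
  (forall a a', a <= a' -> g a' <= g a) -> (forall a, g a <= U) ->
  exists L, lim_at_minus_infty g L /\ (forall a, g a <= L) /\ L <= U.
Proof.
intros Hmono HU.
destruct (completeness (fun v => exists a, v = g a)) as [L [Lub Lleast]].
- exists U. intros v [a ->]. apply HU.
- exists (g 0), 0. reflexivity.
exists L. split; [| split].
- intros eps Heps.
  destruct (classic (exists a0, L - eps < g a0)) as [[a0 Ha0] | Hnone].
  + exists a0. intros a Ha. assert (g a0 <= g a) by (apply Hmono, Ha).
    assert (g a <= L) by (apply Lub; exists a; reflexivity).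
    apply Rabs_def1; lra.
  + exfalso. assert (L <= L - eps); [| lra]. apply Lleast. intros v [a ->].
    apply Rnot_lt_le. intros Hlt. apply Hnone. exists a. exact Hlt.
- intros a. apply Lub. exists a; reflexivity.
- apply Lleast. intros v [a ->]. apply HU.
Qed.

Lemma lim_at_plus_infty_nondecreasing (g : R -> R) U :
  (forall a a', a <= a' -> g a <= g a') -> (forall a, g a <= U) ->
  exists L, lim_at_plus_infty g L /\ (forall a, g a <= L) /\ L <= U.
Proof.
intros Hmono HU.
destruct (lim_at_minus_infty_nonincreasing (fun a => g (- a)) U) as [L [HL [Hle HLU]]].
- intros a a' Ha. apply Hmono. lra.
- intros a. apply HU.
- exists L. split; [apply lim_at_plus_infty_opp, HL | split; [| exact HLU]].
  intros a. replace a with (- - a) by ring. apply Hle.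
Qed.

Lemma Rint_minf_eq (f : R -> R) y L :
  (forall x, continuous f x) -> lim_at_minus_infty (fun a => RInt f a y) L ->
  Rint_minf f y = L.
Proof.
intros Hf HL.
assert (HL' : lim_at_minus_infty (fun a => Rint f a y) L).
{ intros eps Heps. destruct (HL eps Heps) as [M HM]. exists M. intros a Ha.
  rewrite Rint_RInt by exact Hf. apply HM, Ha. }
apply (lim_at_minus_infty_unique (fun a => Rint f a y)); [| exact HL'].
apply (epsilon_spec (inhabits 0) (fun I => lim_at_minus_infty (fun a => Rint f a y) I)).
exists L. exact HL'.
Qed.

Lemma Rint_pinf_eq (f : R -> R) y L :
  (forall x, continuous f x) -> lim_at_plus_infty (fun a => RInt f y a) L ->
  Rint_pinf f y = L.
Proof.
intros Hf HL.
assert (HL' : lim_at_plus_infty (fun a => Rint f y a) L).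
{ intros eps Heps. destruct (HL eps Heps) as [M HM]. exists M. intros a Ha.
  rewrite Rint_RInt by exact Hf. apply HM, Ha. }
apply (lim_at_plus_infty_unique (fun a => Rint f y a)); [| exact HL'].
apply (epsilon_spec (inhabits 0) (fun I => lim_at_plus_infty (fun a => Rint f y a) I)).
exists L. exact HL'.
Qed.

Section ImproperIntegral.

Variables (f : R -> R) (U : R).
Hypothesis f_cont : forall x, continuous f x.
Hypothesis f_ge0 : forall x, 0 <= f x.
Hypothesis RInt_f_bounded : forall a b, a <= b -> RInt f a b <= U.

Lemma RInt_f_bounded_any_order a b : RInt f a b <= U.
Proof.
destruct (Rle_dec a b) as [Hab | Hab]; [now apply RInt_f_bounded |].
assert (RInt f a b <= RInt f b b).
{ rewrite <- (RInt_Chasles_continuous f f_cont b a b).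
  assert (0 <= RInt f b a) by (apply RInt_ge_0; [lra | apply ex_RInt_continuous_R, f_cont | auto]).
  lra. }
specialize (RInt_f_bounded b b (Rle_refl b)). lra.
Qed.

Lemma Rint_minf_spec y :
  lim_at_minus_infty (fun a => RInt f a y) (Rint_minf f y) /\
  (forall a, RInt f a y <= Rint_minf f y) /\ Rint_minf f y <= U.
Proof.
destruct (lim_at_minus_infty_nonincreasing (fun a => RInt f a y) U) as [L [HL HLU]].
- intros a a' Ha. rewrite <- (RInt_Chasles_continuous f f_cont a a' y).
  assert (0 <= RInt f a a') by (apply RInt_ge_0; [lra | apply ex_RInt_continuous_R, f_cont | auto]).
  lra.
- intros a. apply RInt_f_bounded_any_order.
- rewrite (Rint_minf_eq f y L f_cont HL). auto.
Qed.

Lemma Rint_pinf_spec y :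
  lim_at_plus_infty (fun a => RInt f y a) (Rint_pinf f y) /\
  (forall a, RInt f y a <= Rint_pinf f y).
Proof.
destruct (lim_at_plus_infty_nondecreasing (fun a => RInt f y a) U) as [L [HL [HLe _]]].
- intros a a' Ha. rewrite <- (RInt_Chasles_continuous f f_cont y a a').
  assert (0 <= RInt f a a') by (apply RInt_ge_0; [lra | apply ex_RInt_continuous_R, f_cont | auto]).
  lra.
- intros a. apply RInt_f_bounded_any_order.
- rewrite (Rint_pinf_eq f y L f_cont HL). auto.
Qed.

Lemma Rint_minf_Chasles y : Rint_minf f y = Rint_minf f 0 + RInt f 0 y.
Proof.
apply Rint_minf_eq; [exact f_cont |]. intros eps Heps.
destruct (proj1 (Rint_minf_spec 0) eps Heps) as [M HM]. exists M. intros a Ha.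
rewrite <- (RInt_Chasles_continuous f f_cont a 0 y).
replace (RInt f a 0 + RInt f 0 y - (Rint_minf f 0 + RInt f 0 y))
  with (RInt f a 0 - Rint_minf f 0) by ring.
apply HM, Ha.
Qed.

End ImproperIntegral.

Lemma continuous_exp_affine K c d x : continuous (fun z => K * exp (c * z + d)) x.
Proof.
apply (continuous_mult (fun _ => K)); [apply continuous_const |].
apply continuous_exp_comp, (continuous_plus (fun z => c * z)); [| apply continuous_const].
apply (continuous_mult (fun _ => c)); [apply continuous_const | apply continuous_id].
Qed.

Lemma RInt_exp_affine K c d u v : c <> 0 ->
  RInt (fun z => K * exp (c * z + d)) u v = K * (exp (c * v + d) - exp (c * u + d)) / c.
Proof.
intros Hc. apply is_RInt_unique.
replace (K * (exp (c * v + d) - exp (c * u + d)) / c)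
  with (minus (K * exp (c * v + d) / c) (K * exp (c * u + d) / c))
  by (unfold minus, plus, opp; simpl; field; exact Hc).
apply (@is_RInt_derive R_CompleteNormedModule (fun z => K * exp (c * z + d) / c)).
- intros x _. auto_derive; [exact I | field; exact Hc].
- intros x _. exact (continuous_exp_affine K c d x).
Qed.

(* Enlarge [a, b] to [min a (-B), max b B]; each outer piece is at most K/c,
   the integral of the exponential majorant over a half-line. *)
Lemma RInt_le_of_exp_tails (f : R -> R) K c B :
  (forall x, continuous f x) -> (forall x, 0 <= f x) -> 0 <= B -> 0 < c ->
  (forall z, -B <= z <= B -> f z <= K) ->
  (forall z, z <= -B -> f z <= K * exp (c * z + c * B)) ->
  (forall z, B <= z -> f z <= K * exp (- c * z + c * B)) ->
  forall a b, a <= b -> RInt f a b <= K * (2 * B + 2 / c).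
Proof.
intros Hf Hpos HB Hc Hmid Hleft Hright a b Hab.
assert (HK : 0 <= K) by (specialize (Hpos 0); specialize (Hmid 0); lra).
set (a' := Rmin a (- B)). set (b' := Rmax b B).
assert (Ha' : a' <= - B) by apply Rmin_r. assert (Hb' : B <= b') by apply Rmax_r.
assert (Hexp_ge0 : forall t, 0 <= K * exp t / c).
{ intros t. apply Rdiv_le_0_compat; [apply Rmult_le_pos; [lra | left; apply exp_pos] | lra]. }
assert (Hl : RInt f a' (- B) <= K / c).
{ apply Rle_trans with (RInt (fun z => K * exp (c * z + c * B)) a' (- B)).
  - apply RInt_le; [exact Ha' | apply ex_RInt_continuous_R, Hf
                   | apply ex_RInt_continuous_R, continuous_exp_affine | intros; apply Hleft; lra].
  - rewrite RInt_exp_affine by lra. replace (c * - B + c * B) with 0 by ring. rewrite exp_0.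
    replace (K * (1 - exp (c * a' + c * B)) / c)
      with (K / c - K * exp (c * a' + c * B) / c) by (field; lra).
    specialize (Hexp_ge0 (c * a' + c * B)). lra. }
assert (Hr : RInt f B b' <= K / c).
{ apply Rle_trans with (RInt (fun z => K * exp (- c * z + c * B)) B b').
  - apply RInt_le; [exact Hb' | apply ex_RInt_continuous_R, Hf
                   | apply ex_RInt_continuous_R, continuous_exp_affine | intros; apply Hright; lra].
  - rewrite RInt_exp_affine by lra. replace (- c * B + c * B) with 0 by ring. rewrite exp_0.
    replace (K * (exp (- c * b' + c * B) - 1) / - c)
      with (K / c - K * exp (- c * b' + c * B) / c) by (field; lra).
    specialize (Hexp_ge0 (- c * b' + c * B)). lra. }
assert (Hm : RInt f (- B) B <= (B - - B) * K)
  by (apply RInt_le_const; [exact Hf | lra | intros; apply Hmid; lra]).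
apply Rle_trans with (RInt f a' b').
- apply RInt_nonneg_mono; auto; unfold a', b'; [apply Rmin_l | apply Rmax_l].
- rewrite <- (RInt_Chasles_continuous f Hf a' (- B) b'), <- (RInt_Chasles_continuous f Hf (- B) B b').
  unfold Rdiv in *. lra.
Qed.

Definition potential (g : R -> R) (y : R) : R := RInt g 0 y.

Section Potential.

Variables (g : R -> R) (B Kg c : R).
Hypothesis g_cont : forall x, continuous g x.
Hypothesis B_ge0 : 0 <= B.
Hypothesis g_bounded : forall z, - B <= z <= B -> Rabs (g z) <= Kg.
Hypothesis g_left : forall z, z <= - B -> c <= g z.
Hypothesis g_right : forall z, B <= z -> g z <= - c.

Lemma potential_sub u v : potential g v - potential g u = RInt g u v.
Proof. unfold potential. rewrite <- (RInt_Chasles_continuous g g_cont 0 u v). ring. Qed.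

Lemma potential_lipschitz u v :
  - B <= u <= v -> v <= B -> Rabs (potential g v - potential g u) <= (v - u) * Kg.
Proof.
intros Hu Hv. rewrite potential_sub. apply abs_RInt_le_const; [lra | apply ex_RInt_continuous_R, g_cont |].
intros t Ht. apply g_bounded. lra.
Qed.

Lemma potential_abs_le y : - B <= y <= B -> Rabs (potential g y) <= B * Kg.
Proof.
intros Hy. assert (HKg : 0 <= Kg) by (eapply Rle_trans; [apply Rabs_pos | apply (g_bounded 0); lra]).
assert (H0 : potential g 0 = 0) by (unfold potential; rewrite RInt_point; reflexivity).
destruct (Rle_dec 0 y).
- pose proof (potential_lipschitz 0 y ltac:(lra) ltac:(lra)). rewrite H0, Rminus_0_r in H. nra.
- pose proof (potential_lipschitz y 0 ltac:(lra) ltac:(lra)). rewrite H0, Rminus_0_l, Rabs_Ropp in H. nra.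
Qed.

Lemma potential_le_left z : z <= - B -> potential g z <= B * Kg + c * z + c * B.
Proof.
intros Hz.
assert (Hint : (- B - z) * c <= RInt g z (- B))
  by (apply RInt_ge_const; [exact g_cont | exact Hz | intros; apply g_left; lra]).
rewrite <- potential_sub in Hint.
pose proof (proj1 (Rabs_le_between _ _) (potential_abs_le (- B) ltac:(lra))).
lra.
Qed.

Lemma potential_le_right z : B <= z -> potential g z <= B * Kg - c * z + c * B.
Proof.
intros Hz.
assert (Hint : RInt g B z <= (z - B) * - c)
  by (apply RInt_le_const; [exact g_cont | exact Hz | intros; apply g_right; lra]).
rewrite <- potential_sub in Hint. pose proof (proj1 (Rabs_le_between _ _) (potential_abs_le B ltac:(lra))).
lra.
Qed.

Lemma RInt_le_of_le_exp_potential (h : R -> R) M :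
  (forall x, continuous h x) -> (forall x, 0 <= h x) -> 0 < c ->
  (forall z, h z <= M * exp (potential g z)) ->
  forall a b, a <= b -> RInt h a b <= M * exp (B * Kg) * (2 * B + 2 / c).
Proof.
intros Hh Hpos Hc Hle.
assert (HM : 0 <= M).
{ pose proof (exp_pos (potential g 0)). specialize (Hle 0). specialize (Hpos 0). nra. }
assert (Hexp : forall z t, potential g z <= B * Kg + t -> h z <= M * exp (B * Kg) * exp t).
{ intros z t Hz. rewrite Rmult_assoc, <- exp_plus. eapply Rle_trans; [apply Hle |].
  apply Rmult_le_compat_l; [exact HM |]. apply exp_le; exact Hz. }
apply RInt_le_of_exp_tails; auto.
- intros z Hz. rewrite <- (Rmult_1_r (M * exp (B * Kg))), <- exp_0. apply Hexp.
  pose proof (proj1 (Rabs_le_between _ _) (potential_abs_le z Hz)). lra.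
- intros z Hz. apply Hexp. pose proof (potential_le_left z Hz). lra.
- intros z Hz. apply Hexp. pose proof (potential_le_right z Hz). lra.
Qed.

End Potential.

Definition drift (sigma b : R -> R) (y : R) : R := 2 * b y / sigma y ^ 2.

Section Density.

Variables sigma b : R -> R.
Hypothesis sigma_cont : forall x, continuous sigma x.
Hypothesis sigma_neq0 : forall x, sigma x <> 0.
Hypothesis b_cont : forall x, continuous b x.

Lemma continuous_inv_sigma_sq x : continuous (fun y => / sigma y ^ 2) x.
Proof.
apply continuous_Rinv_comp; [| apply pow_nonzero, sigma_neq0].
apply (continuous_mult sigma (fun y => sigma y * 1)); [apply sigma_cont |].
apply (continuous_mult sigma (fun _ => 1)); [apply sigma_cont | apply continuous_const].
Qed.

Lemma drift_continuous x : continuous (drift sigma b) x.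
Proof.
apply (continuous_mult (fun y => 2 * b y)); [| apply continuous_inv_sigma_sq].
apply (continuous_mult (fun _ => 2)); [apply continuous_const | apply b_cont].
Qed.

Lemma rho_unnorm_potential :
  rho_unnorm sigma b = fun x => / sigma x ^ 2 * exp (potential (drift sigma b) x).
Proof.
apply functional_extensionality. intros x. unfold rho_unnorm, potential.
rewrite Rint_RInt by exact drift_continuous. reflexivity.
Qed.

Lemma rho_unnorm_continuous x : continuous (rho_unnorm sigma b) x.
Proof.
rewrite rho_unnorm_potential.
apply (continuous_mult (fun y => / sigma y ^ 2)); [apply continuous_inv_sigma_sq |].
apply continuous_exp_comp, continuous_RInt_0, drift_continuous.
Qed.

Lemma rho_unnorm_pos x : 0 < rho_unnorm sigma b x.
Proof.
rewrite rho_unnorm_potential. apply Rmult_lt_0_compat; [| apply exp_pos].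
apply Rinv_0_lt_compat. rewrite <- Rsqr_pow2. apply Rsqr_pos_lt, sigma_neq0.
Qed.

Variable U : R.
Hypothesis RInt_rho_unnorm_bounded : forall a a', a <= a' -> RInt (rho_unnorm sigma b) a a' <= U.

Let rho_unnorm_ge0 x := Rlt_le _ _ (rho_unnorm_pos x).

Lemma C_bsigma_pos : 0 < C_bsigma sigma b.
Proof.
unfold C_bsigma, Rint_R.
destruct (Rint_minf_spec _ U rho_unnorm_continuous rho_unnorm_ge0 RInt_rho_unnorm_bounded 0)
  as [_ [Hminf _]].
destruct (Rint_pinf_spec _ U rho_unnorm_continuous rho_unnorm_ge0 RInt_rho_unnorm_bounded 0)
  as [_ Hpinf].
assert (0 < RInt (rho_unnorm sigma b) (-1) 0).
{ apply RInt_gt_0; [lra | intros; apply rho_unnorm_pos | intros; apply rho_unnorm_continuous]. }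
specialize (Hminf (-1)). specialize (Hpinf 0). rewrite RInt_point in Hpinf.
change (@zero R_CompleteNormedModule) with 0 in Hpinf. lra.
Qed.

Lemma Rint_minf_rho y :
  Rint_minf (rho sigma b) y = Rint_minf (rho_unnorm sigma b) y / C_bsigma sigma b.
Proof.
apply Rint_minf_eq.
- intros x. apply (continuous_mult (rho_unnorm sigma b));
    [apply rho_unnorm_continuous | apply continuous_const].
- replace (fun a => RInt (rho sigma b) a y)
    with (fun a => RInt (rho_unnorm sigma b) a y / C_bsigma sigma b).
  + apply lim_at_minus_infty_div; [apply C_bsigma_pos |].
    exact (proj1 (Rint_minf_spec _ U rho_unnorm_continuous rho_unnorm_ge0 RInt_rho_unnorm_bounded y)).
  + apply functional_extensionality. intros a. symmetry. apply RInt_div, rho_unnorm_continuous.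
Qed.

Lemma xi_integrand_continuous x :
  continuous (fun y => exp (- potential (drift sigma b) y) * Rint_minf (rho_unnorm sigma b) y) x.
Proof.
set (F := Rint_minf (rho_unnorm sigma b)).
apply (continuous_mult (fun y => exp (- potential (drift sigma b) y))).
- apply continuous_exp_comp, (continuous_opp (potential (drift sigma b))).
  apply continuous_RInt_0, drift_continuous.
- apply (continuous_ext (fun y => F 0 + RInt (rho_unnorm sigma b) 0 y)).
  + intros y. symmetry.
    exact (Rint_minf_Chasles _ U rho_unnorm_continuous rho_unnorm_ge0 RInt_rho_unnorm_bounded y).
  + apply (continuous_plus (fun _ => F 0)); [apply continuous_const |].
    apply continuous_RInt_0, rho_unnorm_continuous.
Qed.

Lemma xi_potential y0 x :
  xi sigma b y0 x =
  2 * RInt (fun y => exp (- potential (drift sigma b) y) * Rint_minf (rho_unnorm sigma b) y) y0 x.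
Proof.
unfold xi. replace (fun y => / (sigma y ^ 2 * rho sigma b y) * Rint_minf (rho sigma b) y)
  with (fun y => exp (- potential (drift sigma b) y) * Rint_minf (rho_unnorm sigma b) y).
- rewrite Rint_RInt; [reflexivity | exact xi_integrand_continuous].
- apply functional_extensionality. intros y. rewrite Rint_minf_rho. unfold rho.
  set (F := Rint_minf (rho_unnorm sigma b)). rewrite rho_unnorm_potential, exp_Ropp.
  pose proof (exp_pos (potential (drift sigma b) y)). pose proof C_bsigma_pos.
  pose proof (pow_nonzero _ 2 (sigma_neq0 y)).
  field. repeat split; auto; lra.
Qed.

End Density.

Section SigmaClass.

Variables (sigma : R -> R) (nu_lo nu_hi C A gamma B : R) (b : R -> R).
Hypothesis sigma_cont : forall x, continuous sigma x.
Hypothesis nu_lo_pos : 0 < nu_lo.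
Hypothesis sigma_bounds : forall x, nu_lo <= Rabs (sigma x) <= nu_hi.
Hypothesis gamma_pos : 0 < gamma.
Hypothesis A_ge0 : 0 <= A.
Hypothesis A_lt_B : A < B.
Hypothesis b_in_Sigma : in_Sigma C A gamma sigma b.

Let Kg := 2 * C * (1 + B) / nu_lo ^ 2.
Let G := potential (drift sigma b).
Let F := Rint_minf (rho_unnorm sigma b).
Let U := / nu_lo ^ 2 * exp (B * Kg) * (2 * B + 2 / (2 * gamma)).

Lemma sigma_sq_bounds x : nu_lo ^ 2 <= sigma x ^ 2 <= nu_hi ^ 2.
Proof. rewrite <- (pow2_abs (sigma x)). specialize (sigma_bounds x). split; apply pow_incr; lra. Qed.

Let sigma_neq0 x : sigma x <> 0.
Proof. intros E. specialize (sigma_bounds x). rewrite E, Rabs_R0 in sigma_bounds. lra. Qed.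

Let b_cont : forall x, continuous b x := locally_lipschitz_continuous b (proj1 b_in_Sigma).

Lemma drift_bounded z : - B <= z <= B -> Rabs (drift sigma b z) <= Kg.
Proof.
intros Hz. pose proof b_in_Sigma as [_ [Hlin _]].
pose proof (sigma_sq_bounds z). assert (0 < nu_lo ^ 2) by (apply pow_lt, nu_lo_pos).
assert (Hb : Rabs (b z) <= C * (1 + B)).
{ eapply Rle_trans; [apply Hlin |].
  assert (0 <= C)
    by (specialize (Hlin 0); pose proof (Rabs_pos (b 0)); rewrite Rabs_R0 in Hlin; lra).
  apply Rmult_le_compat_l; [lra |]. apply Rplus_le_compat_l, Rabs_le. lra. }
unfold drift, Kg, Rdiv.
rewrite Rabs_mult, Rabs_mult, Rabs_inv, (Rabs_right 2), (Rabs_right (sigma z ^ 2)) by lra.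
apply Rmult_le_compat; [pose proof (Rabs_pos (b z)); lra | left; apply Rinv_0_lt_compat; lra | lra |].
apply Rinv_le_contravar; lra.
Qed.

Lemma drift_left z : z <= - B -> 2 * gamma <= drift sigma b z.
Proof.
intros Hz. pose proof b_in_Sigma as [_ [_ Hdrift]].
specialize (Hdrift z ltac:(rewrite Rabs_left by lra; lra)).
unfold sgn in Hdrift. destruct (Rlt_dec 0 z); [lra |]. destruct (Rlt_dec z 0); [| lra].
unfold drift, Rdiv in *. lra.
Qed.

Lemma drift_right z : B <= z -> drift sigma b z <= - (2 * gamma).
Proof.
intros Hz. pose proof b_in_Sigma as [_ [_ Hdrift]].
specialize (Hdrift z ltac:(rewrite Rabs_right by lra; lra)).
unfold sgn in Hdrift. destruct (Rlt_dec 0 z); [| lra].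
unfold drift, Rdiv in *. lra.
Qed.

Lemma RInt_rho_unnorm_le a a' : a <= a' -> RInt (rho_unnorm sigma b) a a' <= U.
Proof.
apply (RInt_le_of_le_exp_potential (drift sigma b) B Kg (2 * gamma)); try lra.
- apply drift_continuous; auto.
- exact drift_bounded.
- exact drift_left.
- exact drift_right.
- apply rho_unnorm_continuous; auto.
- intros x. left; apply rho_unnorm_pos; auto.
- intros z. rewrite rho_unnorm_potential by auto. apply Rmult_le_compat_r; [left; apply exp_pos |].
  pose proof (sigma_sq_bounds z). apply Rinv_le_contravar; [apply pow_lt |]; lra.
Qed.

Let rho_unnorm_cont x : continuous (rho_unnorm sigma b) x.
Proof. apply rho_unnorm_continuous; auto. Qed.

Let rho_unnorm_ge0 x : 0 <= rho_unnorm sigma b x.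
Proof. left; apply rho_unnorm_pos; auto. Qed.

Let F_spec := Rint_minf_spec (rho_unnorm sigma b) U rho_unnorm_cont rho_unnorm_ge0 RInt_rho_unnorm_le.

Lemma tail_mass_lower y : - B <= y - 1 -> y <= B -> exp (G y - Kg) / nu_hi ^ 2 <= F y.
Proof.
intros Hy1 Hy2. destruct (F_spec y) as [_ [HF _]].
eapply Rle_trans; [| apply (HF (y - 1))].
rewrite <- (Rmult_1_l (exp (G y - Kg) / nu_hi ^ 2)). replace 1 with (y - (y - 1)) at 1 by ring.
apply RInt_ge_const; [exact rho_unnorm_cont | lra |]. intros z Hz.
rewrite rho_unnorm_potential by auto. fold G.
pose proof (sigma_sq_bounds z). assert (0 < nu_lo ^ 2) by (apply pow_lt; lra).
rewrite Rmult_comm. unfold Rdiv.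
apply Rmult_le_compat; [left; apply exp_pos | left; apply Rinv_0_lt_compat; lra | |].
- apply exp_le.
  pose proof (potential_lipschitz (drift sigma b) B Kg
                (drift_continuous sigma b sigma_cont sigma_neq0 b_cont)
                drift_bounded z y ltac:(lra) Hy2) as Hlip.
  assert (0 <= Kg) by (eapply Rle_trans; [apply Rabs_pos | apply (drift_bounded 0); lra]).
  apply Rabs_le_between in Hlip. fold G in Hlip. nra.
- apply Rinv_le_contravar; lra.
Qed.

Lemma tail_mass_upper y : F y <= U.
Proof. apply (F_spec y). Qed.

Lemma xi_bounds y0 x :
  - B + 1 <= y0 -> y0 <= x <= B ->
  2 * (x - y0) * (exp (- Kg) / nu_hi ^ 2) <= xi sigma b y0 x <= 2 * (x - y0) * (exp (B * Kg) * U).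
Proof.
intros Hy0 Hx.
rewrite (xi_potential sigma b sigma_cont sigma_neq0 b_cont U RInt_rho_unnorm_le). fold G F.
assert (Hcont : forall z, continuous (fun y => exp (- G y) * F y) z)
  by exact (xi_integrand_continuous sigma b sigma_cont sigma_neq0 b_cont U RInt_rho_unnorm_le).
rewrite !Rmult_assoc. split; apply Rmult_le_compat_l; try lra.
- apply RInt_ge_const; [exact Hcont | lra |]. intros y Hy.
  apply Rle_trans with (exp (- G y) * (exp (G y - Kg) / nu_hi ^ 2)).
  + right. unfold Rdiv. rewrite <- Rmult_assoc, <- exp_plus. do 2 f_equal. ring.
  + apply Rmult_le_compat_l; [left; apply exp_pos | apply tail_mass_lower; lra].
- apply RInt_le_const; [exact Hcont | lra |]. intros y Hy.
  pose proof (proj1 (Rabs_le_between _ _)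
    (potential_abs_le (drift sigma b) B Kg (drift_continuous sigma b sigma_cont sigma_neq0 b_cont)
       ltac:(lra) drift_bounded y ltac:(lra))) as HG.
  fold G in HG.
  assert (0 <= F y).
  { eapply Rle_trans; [| apply tail_mass_lower; lra].
    apply Rdiv_le_0_compat; [left; apply exp_pos | apply pow_lt; pose proof (sigma_bounds 0); lra]. }
  apply Rmult_le_compat; [left; apply exp_pos | lra | apply exp_le; lra | apply tail_mass_upper].
Qed.

End SigmaClass.

Theorem lemma4p1 :
  forall (sigma : R -> R) (nu_lo nu_hi : R),
    locally_lipschitz sigma ->
    0 < nu_lo -> nu_lo <= nu_hi ->
    (forall x, nu_lo <= Rabs (sigma x) <= nu_hi) ->
  forall (C A gamma : R),
    1 <= C -> 0 < A -> 0 < gamma ->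
  forall (y0 y1 ybar : R),
    y0 < y1 -> y1 < ybar ->
  exists M1 M2 : R,
    0 < M1 /\ M1 <= M2 /\
    forall b : R -> R, in_Sigma C A gamma sigma b ->
    forall x : R, y1 <= x <= ybar ->
      M1 <= xi sigma b y0 x <= M2.
Proof.
intros sigma nu_lo nu_hi Hsigma Hlo Hlohi Hbounds C A gamma HC HA Hgamma y0 y1 ybar H01 H1bar.
set (B := A + Rabs y0 + Rabs ybar + 1).
set (Kg := 2 * C * (1 + B) / nu_lo ^ 2).
set (m := exp (- Kg) / nu_hi ^ 2).
set (W := exp (B * Kg) * (/ nu_lo ^ 2 * exp (B * Kg) * (2 * B + 2 / (2 * gamma)))).
assert (HB : - B + 1 <= y0 /\ ybar <= B /\ A < B).
{ unfold B. pose proof (Rle_abs ybar). pose proof (Rle_abs (- y0)). rewrite Rabs_Ropp in *.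
  pose proof (Rabs_pos y0). pose proof (Rabs_pos ybar). lra. }
assert (Hm : 0 < m) by (apply Rdiv_lt_0_compat; [apply exp_pos | apply pow_lt; lra]).
exists (2 * (y1 - y0) * m), (Rmax (2 * (y1 - y0) * m) (2 * (ybar - y0) * W)).
split; [nra | split; [apply Rmax_l |]].
intros b Hb x Hx.
destruct (xi_bounds sigma nu_lo nu_hi C A gamma B b (locally_lipschitz_continuous sigma Hsigma)
            Hlo Hbounds Hgamma (Rlt_le _ _ HA) (proj2 (proj2 HB)) Hb y0 x ltac:(lra) ltac:(lra))
  as [Hlow Hup].
fold Kg m W in Hlow, Hup.
assert (HW : m <= W).
{ apply (Rmult_le_reg_l (2 * (x - y0))); lra. }
split; [| eapply Rle_trans; [| apply Rmax_r]]; nra.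
Qed.
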